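(* Under the standing assumptions below, $\lim_{|v|\to+\infty}\frac{q(s,t,v)}{v}=0$ uniformly in $(s,t)\in[0,\pi]\times\mathbb{T}$.
   Context: $\mathbb{T}=\mathbb{R}/(2\pi\mathbb{Z})$. The distinct values $m^2-n^2$ ($m\in\mathbb{N},n\in\mathbb{N}_0$) are ordered $\dots<\lambda_{-1}<\lambda_0=0<\lambda_1<\dots$. Fix a nonzero integer $k$, $\varepsilon_1\in\,]0,\lambda_k-\lambda_{k-1}[$, $\varepsilon_2$ with $0<\varepsilon_2<\frac{1}{\lambda_k-\lambda_{k-1}-\varepsilon_1}-\max\{0,-\frac{1}{\lambda_{k-1}+\varepsilon_1}\}$, $\mu=\max\{0,-\frac{1}{\lambda_{k-1}+\varepsilon_1}\}+\varepsilon_2$, $p_k=\lambda_{k-1}+\varepsilon_1$, $q_k=\lambda_{k-1}+\varepsilon_1+1/\mu$, and $(a,b)\in\,]p_k,q_k[^2$. Let $p:[0,\pi]\times\mathbb{T}\times\mathbb{R}\to\mathbb{R}$ be continuous with $\lim_{|u|\to+\infty}p(s,t,u)/u=0$ uniformly in $(s,t)$, and such that for each $(s,t)$ the map $u\mapsto au^+-bu^-+p(s,t,u)-p_ku$ is strictly increasing and $u\mapsto au^+-bu^-+p(s,t,u)-q_ku$ is strictly decreasing ($u^+=\max\{u,0\}$, $u^-=u^+-u$). Let $H(u)=\frac12(a-p_k)(u^+)^2+\frac12(b-p_k)(u^-)^2$, $P(s,t,u)=\int_0^up(s,t,\tau)d\tau$, $J=H+P$, and $J^*(s,t,v)=\sup_{u\in\mathbb{R}}[vu-J(s,t,u)]$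 (Fenchel–Legendre transform in $u$), which is $C^1$ in $v$; $H^*(v)=\frac{(v^+)^2}{2(a-p_k)}+\frac{(v^-)^2}{2(b-p_k)}$; $Q(s,t,v)=J^*(s,t,v)-H^*(v)$ and $q=\partial Q/\partial v$. *)

From Stdlib Require Import Reals ZArith.
From Coquelicot Require Import Coquelicot.
Open Scope R_scope.

Definition posp (u : R) : R := Rmax u 0.
Definition negp (u : R) : R := Rmax u 0 - u.

Definition lambda_enum (lam : Z -> R) : Prop :=
  (forall i j : Z, (i < j)%Z -> lam i < lam j) /\
  lam 0%Z = 0 /\
  (forall x : R, (exists i : Z, lam i = x) <->
     exists m n : nat, (1 <= m)%nat /\ x = INR m ^ 2 - INR n ^ 2).

Definition Hf (a b pk u : R) : R :=
  / 2 * (a - pk) * (posp u) ^ 2 + / 2 * (b - pk) * (negp u) ^ 2.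

Definition Pf (p : R -> R -> R -> R) (s t u : R) : R :=
  RInt (fun tau => p s t tau) 0 u.

Definition Jf (a b pk : R) (p : R -> R -> R -> R) (s t u : R) : R :=
  Hf a b pk u + Pf p s t u.

Definition fenchel (f : R -> R) (v : R) : R :=
  real (Lub_Rbar (fun y => exists u : R, y = v * u - f u)).

Definition Jstar (a b pk : R) (p : R -> R -> R -> R) (s t v : R) : R :=
  fenchel (Jf a b pk p s t) v.

Definition Hstar (a b pk v : R) : R :=
  (posp v) ^ 2 / (2 * (a - pk)) + (negp v) ^ 2 / (2 * (b - pk)).

Definition Qf (a b pk : R) (p : R -> R -> R -> R) (s t v : R) : R :=
  Jstar a b pk p s t v - Hstar a b pk v.

Definition qf (a b pk : R) (p : R -> R -> R -> R) (s t v : R) : R :=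
  Derive (fun w => Qf a b pk p s t w) v.

From Stdlib Require Import Reals ZArith Lra Psatz.
From Coquelicot Require Import Coquelicot.
Open Scope R_scope.

(* Fix (s,t) and put f := p(s,t,.). The primal J = H + P is differentiable
   with derivative G(u) = (a-p_k)u^+ - (b-p_k)u^- + f(u), strictly increasing
   and onto R, so J is convex and sup_u [v u - J u] is attained at u = G^{-1}(v).
   Hence the difference quotients of J^* on [v, v+h] lie between G^{-1}(v) and
   G^{-1}(v+h). As f(u) = o(u) uniformly in (s,t), G^{-1}(v) = v/(a-p_k) + o(v)
   as v -> +oo and v/(b-p_k) + o(v) as v -> -oo, which are the slopes of H^*;
   so q, the derivative of J^* - H^*, is o(v). *)

Lemma posp_of_nonneg u : 0 <= u -> posp u = u.
Proof. intros; unfold posp; apply Rmax_left; lra. Qed.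

Lemma negp_of_nonneg u : 0 <= u -> negp u = 0.
Proof. intros; unfold negp, posp; rewrite Rmax_left; lra. Qed.

Lemma posp_of_nonpos u : u <= 0 -> posp u = 0.
Proof. intros; unfold posp; apply Rmax_right; lra. Qed.

Lemma negp_of_nonpos u : u <= 0 -> negp u = - u.
Proof. intros; unfold negp, posp; rewrite Rmax_right; lra. Qed.

Lemma posp_lipschitz x y : Rabs (posp y - posp x) <= Rabs (y - x).
Proof.
  unfold posp, Rmax; destruct (Rle_dec y 0), (Rle_dec x 0);
    unfold Rabs; repeat destruct Rcase_abs; lra.
Qed.

Lemma negp_lipschitz x y : Rabs (negp y - negp x) <= Rabs (y - x).
Proof.
  unfold negp, posp, Rmax; destruct (Rle_dec y 0), (Rle_dec x 0);
    unfold Rabs; repeat destruct Rcase_abs; lra.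
Qed.

Lemma posp_sqr_taylor x h :
  Rabs (posp (x + h) ^ 2 - posp x ^ 2 - 2 * posp x * h) <= h ^ 2.
Proof.
  unfold posp, Rmax; destruct (Rle_dec (x + h) 0), (Rle_dec x 0);
    unfold Rabs; repeat destruct Rcase_abs; nra.
Qed.

Lemma negp_sqr_taylor x h :
  Rabs (negp (x + h) ^ 2 - negp x ^ 2 + 2 * negp x * h) <= h ^ 2.
Proof.
  unfold negp, posp, Rmax; destruct (Rle_dec (x + h) 0), (Rle_dec x 0);
    unfold Rabs; repeat destruct Rcase_abs; nra.
Qed.

Lemma continuous_of_lipschitz_at (F : R -> R) (C x : R) : 0 < C ->
  (forall y, Rabs (F y - F x) <= C * Rabs (y - x)) -> continuous F x.
Proof.
  intros HC HL; apply filterlim_locally; intros eps.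
  assert (He : 0 < eps / C) by (apply Rdiv_lt_0_compat; [apply cond_pos | lra]).
  exists (mkposreal _ He); intros y Hy.
  change (Rabs (F y - F x) < eps); change (Rabs (y - x) < eps / C) in Hy.
  apply Rmult_lt_compat_l with (r := C) in Hy; [| lra].
  replace (C * (eps / C)) with (pos eps) in Hy by (field; lra).
  specialize (HL y); lra.
Qed.

Lemma is_derive_of_quadratic_remainder (F : R -> R) (x d C : R) : 0 < C ->
  (forall h, Rabs (F (x + h) - F x - d * h) <= C * h ^ 2) -> is_derive F x d.
Proof.
  intros HC HB; apply is_derive_Reals; intros eps Heps.
  assert (He : 0 < eps / C) by (apply Rdiv_lt_0_compat; lra).
  exists (mkposreal _ He); intros h Hh Hhl; simpl in Hhl.
  assert (Hh0 : 0 < Rabs h) by (apply Rabs_pos_lt; auto).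
  replace ((F (x + h) - F x) / h - d) with ((F (x + h) - F x - d * h) / h)
    by (field; auto).
  unfold Rdiv; rewrite Rabs_mult, Rabs_inv.
  apply Rmult_lt_reg_r with (Rabs h); [lra |].
  rewrite Rmult_assoc, Rinv_l by lra; rewrite Rmult_1_r.
  specialize (HB h).
  replace (h ^ 2) with (Rabs h * Rabs h) in HB
    by (rewrite <- Rabs_mult, Rabs_right; nra).
  apply Rmult_lt_compat_l with (r := C) in Hhl; [| lra].
  replace (C * (eps / C)) with eps in Hhl by (field; lra).
  nra.
Qed.

(* [Derive] is a limit of difference quotients along [h = 1/(n+1)], so it
   inherits any bound on them, whether or not [F] is differentiable. *)
Lemma Derive_bounds_of_slope_bounds (F : R -> R) x L U :
  (forall h, 0 < h <= 1 -> L <= (F (x + h) - F x) / h <= U) ->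
  L <= Derive F x <= U.
Proof.
  intros HB; unfold Derive, Lim.
  set (s := fun n : nat => (F (x + Rbar_loc_seq 0 n) - F x) / Rbar_loc_seq 0 n).
  assert (Hs : forall n, L <= s n <= U).
  { intros n; unfold s; simpl; apply HB; pose proof (pos_INR n).
    rewrite Rplus_0_l; split; [apply Rinv_0_lt_compat; lra |].
    rewrite <- Rinv_1; apply Rinv_le_contravar; lra. }
  assert (HU : Rbar_le (Lim_seq s) (Lim_seq (fun _ => U)))
    by (apply Lim_seq_le_loc; exists 0%nat; intros; apply Hs).
  assert (HL : Rbar_le (Lim_seq (fun _ => L)) (Lim_seq s))
    by (apply Lim_seq_le_loc; exists 0%nat; intros; apply Hs).
  rewrite Lim_seq_const in HU, HL; fold s.
  destruct (Lim_seq s); simpl in *; try contradiction; lra.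
Qed.

Lemma approx_inverse_of_linear c d u w : 0 < c -> 0 <= d <= c / 2 ->
  Rabs (w - c * u) <= d * Rabs u -> Rabs (u - w / c) <= 2 * d * Rabs w / c ^ 2.
Proof.
  intros Hc Hd Hwu.
  assert (HcU : c * Rabs u <= Rabs w + d * Rabs u).
  { rewrite <- (Rabs_right c) at 1 by lra; rewrite <- Rabs_mult.
    replace (c * u) with (w - (w - c * u)) by ring.
    eapply Rle_trans; [apply Rabs_triang | rewrite Rabs_Ropp; lra]. }
  assert (HU : Rabs u <= 2 * Rabs w / c).
  { apply Rmult_le_reg_l with c; [lra |].
    replace (c * (2 * Rabs w / c)) with (2 * Rabs w) by (field; lra).
    pose proof (Rabs_pos u); nra. }
  replace (u - w / c) with (- ((w - c * u) / c)) by (field; lra).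
  rewrite Rabs_Ropp; unfold Rdiv; rewrite Rabs_mult, Rabs_inv, (Rabs_right c) by lra.
  replace (2 * d * Rabs w * / c ^ 2) with (d * (2 * Rabs w / c) * / c)
    by (field; lra).
  apply Rmult_le_compat_r; [left; apply Rinv_0_lt_compat; lra |].
  apply Rle_trans with (d * Rabs u); [lra | apply Rmult_le_compat_l; lra].
Qed.

(* For fixed (s,t), [Jq (a - p_k) (b - p_k) (p s t)], [Gq (a - p_k) (b - p_k) (p s t)]
   and [quad_conj (a - p_k) (b - p_k)] are J, J' and H^* (convertibly so). *)
Definition Jq (al be : R) (f : R -> R) (u : R) : R :=
  / 2 * al * posp u ^ 2 + / 2 * be * negp u ^ 2 + RInt f 0 u.

Definition Gq (al be : R) (f : R -> R) (u : R) : R :=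
  al * posp u - be * negp u + f u.

Definition quad_conj (al be w : R) : R :=
  posp w ^ 2 / (2 * al) + negp w ^ 2 / (2 * be).

Lemma quad_conj_slope_nonneg al be w h : 0 < al -> 0 <= w -> 0 < h ->
  (quad_conj al be (w + h) - quad_conj al be w) / h = (2 * w + h) / (2 * al).
Proof.
  intros; unfold quad_conj.
  rewrite (posp_of_nonneg w), (posp_of_nonneg (w + h)),
    (negp_of_nonneg w), (negp_of_nonneg (w + h)) by lra.
  replace (0 ^ 2 / (2 * be)) with 0 by (unfold Rdiv; ring).
  field; lra.
Qed.

Lemma quad_conj_slope_nonpos al be w h : 0 < be -> w + h <= 0 -> 0 < h ->
  (quad_conj al be (w + h) - quad_conj al be w) / h = (2 * w + h) / (2 * be).
Proof.
  intros; unfold quad_conj.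
  rewrite (posp_of_nonpos w), (posp_of_nonpos (w + h)),
    (negp_of_nonpos w), (negp_of_nonpos (w + h)) by lra.
  replace (0 ^ 2 / (2 * al)) with 0 by (unfold Rdiv; ring).
  field; lra.
Qed.

Lemma Jq_derive al be f x : (forall y, continuous f y) ->
  is_derive (Jq al be f) x (Gq al be f x).
Proof.
  intros Hf; unfold Jq, Gq.
  apply (is_derive_plus (fun u => / 2 * al * posp u ^ 2 + / 2 * be * negp u ^ 2)
    (fun u => RInt f 0 u)).
  - apply is_derive_of_quadratic_remainder with (C := Rabs al + Rabs be + 1).
    { pose proof (Rabs_pos al); pose proof (Rabs_pos be); lra. }
    intros h.
    replace (/ 2 * al * posp (x + h) ^ 2 + / 2 * be * negp (x + h) ^ 2
             - (/ 2 * al * posp x ^ 2 + / 2 * be * negp x ^ 2)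
             - (al * posp x - be * negp x) * h)
      with (/ 2 * al * (posp (x + h) ^ 2 - posp x ^ 2 - 2 * posp x * h)
            + / 2 * be * (negp (x + h) ^ 2 - negp x ^ 2 + 2 * negp x * h))
      by field.
    eapply Rle_trans; [apply Rabs_triang |].
    rewrite !Rabs_mult, (Rabs_right (/ 2)) by lra.
    pose proof (posp_sqr_taylor x h); pose proof (negp_sqr_taylor x h).
    pose proof (Rabs_pos al); pose proof (Rabs_pos be).
    pose proof (Rabs_pos (posp (x + h) ^ 2 - posp x ^ 2 - 2 * posp x * h)).
    pose proof (Rabs_pos (negp (x + h) ^ 2 - negp x ^ 2 + 2 * negp x * h)).
    nra.
  - apply (is_derive_RInt f (fun u => RInt f 0 u) 0 x); [| apply Hf].
    apply filter_forall; intros y; apply (@RInt_correct R_CompleteNormedModule).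
    apply ex_RInt_continuous; intros; apply Hf.
Qed.

Lemma Gq_continuous al be f x : (forall y, continuous f y) ->
  continuous (Gq al be f) x.
Proof.
  intros Hf; unfold Gq.
  apply (continuous_plus (fun u => al * posp u - be * negp u) f); [| apply Hf].
  apply continuous_of_lipschitz_at with (C := Rabs al + Rabs be + 1).
  { pose proof (Rabs_pos al); pose proof (Rabs_pos be); lra. }
  intros y.
  replace (al * posp y - be * negp y - (al * posp x - be * negp x))
    with (al * (posp y - posp x) - be * (negp y - negp x)) by ring.
  eapply Rle_trans; [apply Rabs_triang |]; rewrite Rabs_Ropp, !Rabs_mult.
  pose proof (posp_lipschitz x y); pose proof (negp_lipschitz x y).
  pose proof (Rabs_pos al); pose proof (Rabs_pos be).
  pose proof (Rabs_pos (posp y - posp x)); pose proof (Rabs_pos (negp y - negp x)).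
  pose proof (Rabs_pos (y - x)); nra.
Qed.

Lemma Gq_shift a b pk f u :
  Gq (a - pk) (b - pk) f u = a * posp u - b * negp u + f u - pk * u.
Proof. unfold Gq, negp, posp; ring. Qed.

Section QuadraticPlusSublinear.

Variables (al be : R) (f : R -> R).
Hypothesis al_pos : 0 < al.
Hypothesis be_pos : 0 < be.
Hypothesis f_continuous : forall y, continuous f y.
Hypothesis Gq_increasing : forall u1 u2, u1 < u2 -> Gq al be f u1 < Gq al be f u2.

Local Notation J := (Jq al be f).
Local Notation G := (Gq al be f).

Lemma Gq_le_inj x y : G x <= G y -> x <= y.
Proof.
  intros H; destruct (Rle_dec x y) as [| Hyx]; [easy |].
  specialize (Gq_increasing y x ltac:(lra)); lra.
Qed.

Lemma Jq_supporting_line u w : J w + G w * (u - w) <= J u.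
Proof.
  destruct (MVT_gen J w u G) as [c [Hc HJ]].
  - intros; apply Jq_derive, f_continuous.
  - intros; apply continuity_pt_filterlim, (ex_derive_continuous J).
    eexists; apply Jq_derive, f_continuous.
  - destruct (Rle_dec w u).
    + rewrite Rmin_left, Rmax_right in Hc by lra.
      assert (G w <= G c) by (destruct (Req_dec w c); [subst; lra |
        left; apply Gq_increasing; lra]).
      nra.
    + rewrite Rmin_right, Rmax_left in Hc by lra.
      assert (G c <= G w) by (destruct (Req_dec c w); [subst; lra |
        left; apply Gq_increasing; lra]).
      nra.
Qed.

Lemma fenchel_Jq u w : G u = w -> fenchel J w = w * u - J u.
Proof.
  intros Hu; unfold fenchel.
  rewrite (is_lub_Rbar_unique _ (Finite (w * u - J u))); [reflexivity |].
  split.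
  - intros y [u' ->]; simpl.
    pose proof (Jq_supporting_line u' u); rewrite Hu in *; nra.
  - intros y Hy; apply Hy; exists u; reflexivity.
Qed.

Lemma fenchel_Jq_slope_bounds w h u1 u2 : 0 < h -> G u1 = w -> G u2 = w + h ->
  u1 <= (fenchel J (w + h) - fenchel J w) / h <= u2.
Proof.
  intros Hh H1 H2.
  rewrite (fenchel_Jq u1 w), (fenchel_Jq u2 (w + h)) by assumption.
  pose proof (Jq_supporting_line u2 u1) as C1.
  pose proof (Jq_supporting_line u1 u2) as C2.
  rewrite H1 in C1; rewrite H2 in C2.
  split; apply Rmult_le_reg_r with h; auto; unfold Rdiv;
    rewrite Rmult_assoc, Rinv_l by lra; nra.
Qed.

Variables d M : R.
Hypothesis M_pos : 0 < M.
Hypothesis d_range : 0 <= d <= Rmin al be / 2.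
Hypothesis f_growth : forall u, M <= Rabs u -> Rabs (f u) <= d * Rabs u.

Let d_le_al : d <= al / 2.
Proof. pose proof (Rmin_l al be); lra. Qed.

Let d_le_be : d <= be / 2.
Proof. pose proof (Rmin_r al be); lra. Qed.

Lemma Gq_surjective w : exists u, G u = w.
Proof.
  set (r := M + 2 * Rabs w / al + 2 * Rabs w / be).
  pose proof (Rabs_pos w).
  assert (Hr : M <= r /\ 2 * Rabs w <= al * r /\ 2 * Rabs w <= be * r).
  { assert (0 <= 2 * Rabs w / al) by (apply Rdiv_le_0_compat; lra).
    assert (0 <= 2 * Rabs w / be) by (apply Rdiv_le_0_compat; lra).
    unfold r; split; [lra | split].
    - replace (al * (M + 2 * Rabs w / al + 2 * Rabs w / be))
        with (al * M + 2 * Rabs w + al * (2 * Rabs w / be)) by (field; lra).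
      nra.
    - replace (be * (M + 2 * Rabs w / al + 2 * Rabs w / be))
        with (be * M + be * (2 * Rabs w / al) + 2 * Rabs w) by (field; lra).
      nra. }
  assert (Hfr := f_growth r); assert (Hfmr := f_growth (- r)).
  rewrite Rabs_right in Hfr by lra; rewrite Rabs_Ropp, Rabs_right in Hfmr by lra.
  specialize (Hfr ltac:(lra)); specialize (Hfmr ltac:(lra)).
  apply Rabs_le_between in Hfr; apply Rabs_le_between in Hfmr.
  assert (Hup : w <= G r).
  { unfold Gq; rewrite posp_of_nonneg, negp_of_nonneg by lra.
    pose proof (Rle_abs w); nra. }
  assert (Hlo : G (- r) <= w).
  { unfold Gq; rewrite posp_of_nonpos, negp_of_nonpos by lra.
    pose proof (Rle_abs (- w)); rewrite Rabs_Ropp in *; nra. }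
  destruct (IVT_gen_consistent G (- r) r w) as [u [_ Hu]].
  - intros; apply Gq_continuous, f_continuous.
  - rewrite Rmin_left, Rmax_right by lra; lra.
  - exists u; exact Hu.
Qed.

Lemma Gq_inverse_approx_pos u w : (al + d) * M <= w -> G u = w ->
  Rabs (u - w / al) <= 2 * d * Rabs w / al ^ 2.
Proof.
  intros Hw Hu.
  assert (HfM := f_growth M); rewrite Rabs_right in HfM by lra.
  specialize (HfM ltac:(lra)); apply Rabs_le_between in HfM.
  assert (HuM : M <= u).
  { apply Gq_le_inj; rewrite Hu; unfold Gq.
    rewrite posp_of_nonneg, negp_of_nonneg by lra; nra. }
  apply approx_inverse_of_linear; [lra | lra |].
  rewrite <- Hu; unfold Gq; rewrite posp_of_nonneg, negp_of_nonneg by lra.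
  replace (al * u - be * 0 + f u - al * u) with (f u) by ring.
  apply f_growth; rewrite Rabs_right; lra.
Qed.

Lemma Gq_inverse_approx_neg u w : w <= - ((be + d) * M) -> G u = w ->
  Rabs (u - w / be) <= 2 * d * Rabs w / be ^ 2.
Proof.
  intros Hw Hu.
  assert (HfM := f_growth (- M)); rewrite Rabs_Ropp, Rabs_right in HfM by lra.
  specialize (HfM ltac:(lra)); apply Rabs_le_between in HfM.
  assert (HuM : u <= - M).
  { apply Gq_le_inj; rewrite Hu; unfold Gq.
    rewrite posp_of_nonpos, negp_of_nonpos by lra; nra. }
  apply approx_inverse_of_linear; [lra | lra |].
  rewrite <- Hu; unfold Gq; rewrite posp_of_nonpos, negp_of_nonpos by lra.
  replace (al * 0 - be * - u + f u - be * u) with (f u) by ring.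
  apply f_growth; rewrite Rabs_left1; lra.
Qed.

Local Notation Q := (fun w => fenchel J w - quad_conj al be w).

Lemma Derive_conj_diff_bounds c v u1 u3 : 0 < c ->
  (forall h, 0 < h <= 1 ->
     (quad_conj al be (v + h) - quad_conj al be v) / h = (2 * v + h) / (2 * c)) ->
  G u1 = v -> G u3 = v + 1 ->
  u1 - v / c - / (2 * c) <= Derive Q v <= u3 - v / c.
Proof.
  intros Hc Hslope Hu1 Hu3; apply Derive_bounds_of_slope_bounds.
  intros h Hh; destruct (Gq_surjective (v + h)) as [u2 Hu2].
  replace ((fenchel J (v + h) - quad_conj al be (v + h)
            - (fenchel J v - quad_conj al be v)) / h)
    with ((fenchel J (v + h) - fenchel J v) / h
          - (quad_conj al be (v + h) - quad_conj al be v) / h) by (field; lra).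
  rewrite Hslope by lra.
  pose proof (fenchel_Jq_slope_bounds v h u1 u2 ltac:(lra) Hu1 Hu2).
  assert (u2 <= u3) by (apply Gq_le_inj; rewrite Hu2, Hu3; lra).
  replace ((2 * v + h) / (2 * c)) with (v / c + h * / (2 * c)) by (field; lra).
  assert (0 < / (2 * c)) by (apply Rinv_0_lt_compat; lra).
  assert (h * / (2 * c) <= / (2 * c)) by nra.
  assert (0 <= h * / (2 * c)) by nra.
  lra.
Qed.

Lemma Derive_conj_diff_abs_le c v : 0 < c -> 1 <= Rabs v ->
  (forall h, 0 < h <= 1 ->
     (quad_conj al be (v + h) - quad_conj al be v) / h = (2 * v + h) / (2 * c)) ->
  (forall u w, v <= w <= v + 1 -> G u = w ->
     Rabs (u - w / c) <= 2 * d * Rabs w / c ^ 2) ->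
  Rabs (Derive Q v) <= 6 * d * Rabs v / c ^ 2 + / c.
Proof.
  intros Hc Hv Hslope Happrox.
  destruct (Gq_surjective v) as [u1 Hu1]; destruct (Gq_surjective (v + 1)) as [u3 Hu3].
  pose proof (Derive_conj_diff_bounds c v u1 u3 Hc Hslope Hu1 Hu3) as HD.
  pose proof (Happrox u1 v ltac:(lra) Hu1) as A1.
  pose proof (Happrox u3 (v + 1) ltac:(lra) Hu3) as A3.
  set (k := d / c ^ 2).
  assert (Hk : 0 <= k) by (apply Rdiv_le_0_compat; [lra | nra]).
  replace (2 * d * Rabs v / c ^ 2) with (2 * k * Rabs v) in A1 by (unfold k; field; lra).
  replace (2 * d * Rabs (v + 1) / c ^ 2) with (2 * k * Rabs (v + 1)) in A3
    by (unfold k; field; lra).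
  replace (6 * d * Rabs v / c ^ 2) with (6 * k * Rabs v) by (unfold k; field; lra).
  replace ((v + 1) / c) with (v / c + / c) in A3 by (field; lra).
  replace (/ (2 * c)) with (/ c / 2) in HD by (field; lra).
  assert (Hv1 : Rabs (v + 1) <= 2 * Rabs v)
    by (pose proof (Rabs_triang v 1); rewrite Rabs_R1 in *; lra).
  assert (0 < / c) by (apply Rinv_0_lt_compat; lra).
  apply Rabs_le_between in A1; apply Rabs_le_between in A3.
  apply Rabs_le_between; nra.
Qed.

Lemma Derive_conj_diff_abs_le_far v :
  (al + d) * M + (be + d) * M + 1 <= Rabs v ->
  Rabs (Derive Q v) <= 6 * d * Rabs v / Rmin al be ^ 2 + / Rmin al be.
Proof.
  intros Hv.
  assert (Hm : 0 < Rmin al be) by (apply Rmin_pos; lra).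
  assert (HM : 0 <= (al + d) * M /\ 0 <= (be + d) * M) by (split; nra).
  assert (Hmono : forall c, Rmin al be <= c ->
    6 * d * Rabs v / c ^ 2 + / c <= 6 * d * Rabs v / Rmin al be ^ 2 + / Rmin al be).
  { intros c Hmc; pose proof (Rabs_pos v).
    apply Rplus_le_compat; [| apply Rinv_le_contravar; lra].
    unfold Rdiv; apply Rmult_le_compat_l; [nra |].
    apply Rinv_le_contravar; nra. }
  eapply Rle_trans; [| apply Hmono with (c := if Rle_dec 0 v then al else be)].
  - destruct (Rle_dec 0 v) as [Hv0 | Hv0].
    + rewrite Rabs_right in Hv by lra.
      apply Derive_conj_diff_abs_le; [lra | rewrite Rabs_right; lra | |].
      * intros h Hh; apply quad_conj_slope_nonneg; lra.
      * intros u w Hw Hu; apply Gq_inverse_approx_pos; [lra | exact Hu].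
    + rewrite Rabs_left in Hv by lra.
      apply Derive_conj_diff_abs_le; [lra | rewrite Rabs_left; lra | |].
      * intros h Hh; apply quad_conj_slope_nonpos; lra.
      * intros u w Hw Hu; apply Gq_inverse_approx_neg; [lra | exact Hu].
  - destruct (Rle_dec 0 v); [apply Rmin_l | apply Rmin_r].
Qed.

End QuadraticPlusSublinear.

Lemma continuous_slice (p : R -> R -> R -> R) s t u : 0 <= s <= PI ->
  filterlim (fun x : R * R * R => p (fst (fst x)) (snd (fst x)) (snd x))
    (within (fun x : R * R * R => 0 <= fst (fst x) <= PI) (locally (s, t, u)))
    (locally (p s t u)) ->
  continuous (p s t) u.
Proof.
  intros Hs Hp.
  apply (filterlim_comp R (R * R * R) R (fun y => (s, t, y))
    (fun x : R * R * R => p (fst (fst x)) (snd (fst x)) (snd x)) (locally u)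
    (within (fun x : R * R * R => 0 <= fst (fst x) <= PI) (locally (s, t, u)))
    (locally (p s t u))); [| exact Hp].
  intros P [eps Heps]; exists eps; intros y Hy.
  apply Heps; [split; [split; apply ball_center | exact Hy] | simpl; lra].
Qed.

Lemma abs_le_of_ratio_le (g : R -> R) d M : 0 < M ->
  (forall u, M <= Rabs u -> Rabs (g u / u) <= d) ->
  forall u, M <= Rabs u -> Rabs (g u) <= d * Rabs u.
Proof.
  intros HM Hg u Hu; specialize (Hg u Hu).
  assert (Hu0 : u <> 0) by (intros ->; rewrite Rabs_R0 in Hu; lra).
  replace (g u) with (g u / u * u) by (field; auto).
  rewrite Rabs_mult; apply Rmult_le_compat_r; [apply Rabs_pos | exact Hg].
Qed.

Lemma ratio_le_of_abs_le x v e : 0 < Rabs v -> Rabs x <= e * Rabs v ->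
  Rabs (x / v) <= e.
Proof.
  intros Hv Hx; unfold Rdiv; rewrite Rabs_mult, Rabs_inv.
  apply Rmult_le_reg_r with (Rabs v); [exact Hv |].
  rewrite Rmult_assoc, Rinv_l by lra; lra.
Qed.

Lemma affine_bound_le_of_small_slope m e d x : 0 < m -> 0 < e ->
  d <= e * m ^ 2 / 12 -> 2 / (m * e) <= x -> 6 * d * x / m ^ 2 + / m <= e * x.
Proof.
  intros Hm He Hd Hx.
  assert (Hme : 0 < m * e) by nra.
  assert (6 * d * x / m ^ 2 <= e * x / 2).
  { assert (0 <= x) by (pose proof (Rdiv_lt_0_compat 2 _ ltac:(lra) Hme); lra).
    apply Rmult_le_reg_r with (m ^ 2); [nra |].
    replace (6 * d * x / m ^ 2 * m ^ 2) with (6 * d * x) by (field; lra).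
    nra. }
  assert (/ m <= e * x / 2).
  { assert (2 <= x * (m * e)).
    { apply Rmult_le_reg_r with (/ (m * e)); [apply Rinv_0_lt_compat; lra |].
      rewrite Rmult_assoc, Rinv_r by lra; lra. }
    apply Rmult_le_reg_r with (m * e); [lra |].
    replace (/ m * (m * e)) with e by (field; lra).
    nra. }
  lra.
Qed.

Theorem lemma3 (lam : Z -> R) (k : Z) (eps1 eps2 a b : R)
  (p : R -> R -> R -> R) :
  lambda_enum lam ->
  k <> 0%Z ->
  0 < eps1 < lam k - lam (k - 1)%Z ->
  let pk := lam (k - 1)%Z + eps1 in
  0 < eps2 < / (lam k - lam (k - 1)%Z - eps1) - Rmax 0 (- / pk) ->
  let mu := Rmax 0 (- / pk) + eps2 in
  let qk := pk + / mu in
  pk < a < qk -> pk < b < qk ->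
  (* p continuous on [0,pi] x T x R (T = R/2piZ: p is 2pi-periodic in t) *)
  (forall s t u, 0 <= s <= PI ->
     filterlim (fun x : R * R * R => p (fst (fst x)) (snd (fst x)) (snd x))
       (within (fun x : R * R * R => 0 <= fst (fst x) <= PI) (locally (s, t, u)))
       (locally (p s t u))) ->
  (forall s t u, p s (t + 2 * PI) u = p s t u) ->
  (* lim_{|u|->oo} p(s,t,u)/u = 0 uniformly in (s,t) *)
  (forall e, 0 < e -> exists M, 0 < M /\ forall s t u, 0 <= s <= PI ->
     M <= Rabs u -> Rabs (p s t u / u) <= e) ->
  (forall s t u1 u2, 0 <= s <= PI -> u1 < u2 ->
     a * posp u1 - b * negp u1 + p s t u1 - pk * u1
     < a * posp u2 - b * negp u2 + p s t u2 - pk * u2) ->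
  (forall s t u1 u2, 0 <= s <= PI -> u1 < u2 ->
     a * posp u1 - b * negp u1 + p s t u1 - qk * u1
     > a * posp u2 - b * negp u2 + p s t u2 - qk * u2) ->
  (* conclusion: lim_{|v|->oo} q(s,t,v)/v = 0 uniformly in (s,t) *)
  forall e, 0 < e -> exists M, 0 < M /\ forall s t v, 0 <= s <= PI ->
     M <= Rabs v -> Rabs (qf a b pk p s t v / v) <= e.
Proof.
  intros _ _ _ pk _ mu qk Ha Hb Hcont _ Hgrow Hincr _ e He.
  set (m := Rmin (a - pk) (b - pk)).
  assert (Hm : 0 < m) by (apply Rmin_pos; lra).
  assert (Hm2 : 0 < m ^ 2) by (apply pow_lt; lra).
  set (d := Rmin (m / 2) (e * m ^ 2 / 12)).
  assert (Hd : 0 < d /\ d <= m / 2 /\ d <= e * m ^ 2 / 12).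
  { assert (0 < e * m ^ 2 / 12)
      by (apply Rdiv_lt_0_compat; [apply Rmult_lt_0_compat |]; lra).
    split; [apply Rmin_pos; lra | split; [apply Rmin_l | apply Rmin_r]]. }
  destruct (Hgrow d ltac:(lra)) as [M [HM HpM]].
  assert (Hme : 0 < 2 / (m * e)) by (apply Rdiv_lt_0_compat; nra).
  assert (0 <= (a - pk + d) * M + (b - pk + d) * M)
    by (apply Rplus_le_le_0_compat; apply Rmult_le_pos; lra).
  exists ((a - pk + d) * M + (b - pk + d) * M + 1 + 2 / (m * e)); split; [lra |].
  intros s t v Hs Hv; apply ratio_le_of_abs_le; [lra |].
  eapply Rle_trans.
  { apply (Derive_conj_diff_abs_le_far (a - pk) (b - pk) (p s t))
      with (d := d) (M := M); try lra.
    - intros y; apply continuous_slice with (1 := Hs), Hcont, Hs.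
    - intros u1 u2 Hu; rewrite !Gq_shift; apply Hincr; assumption.
    - fold m; lra.
    - apply abs_le_of_ratio_le; [exact HM | intros u; apply HpM, Hs]. }
  fold m; apply affine_bound_le_of_small_slope; lra.
Qed.
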